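(* In the reachability strategy-improvement algorithm described in the context, let $\gamma_i$ and $\gamma_{i+1}$ be the player-1 selectors obtained at iterations $i$ and $i+1$. If $\gamma_i$ is proper, then $\gamma_{i+1}$ is also proper.
   Context: Concurrent game structure $G=(S,M,\Gamma_1,\Gamma_2,\delta)$: finite states, finite moves, nonempty move sets $\Gamma_i(s)$, $\delta(s,a_1,a_2)\in\mathrm{Distr}(S)$ (simultaneous independent moves). Selectors assign to each state a distribution on available moves; $\overline{\xi}$ is the memoryless strategy playing $\xi$ forever; $\Pr_s^{\pi_1,\pi_2}$ is the induced measure on plays; $\mathrm{Reach}(X)$: plays visiting $X$. $\mathrm{val}_1^{\pi_1}(\mathrm{Reach}(T))(s)=\inf_{\pi_2}\Pr_s^{\pi_1,\pi_2}(\mathrm{Reach}(T))$, $\mathrm{val}_1(\mathrm{Reach}(T))=\sup_{\pi_1}\mathrm{val}_1^{\pi_1}(\mathrm{Reach}(T))$. For a valuation $v:S\to[0,1]$: $\mathrm{Pre}_{\xi_1,\xi_2}(v)(s)=\sum_{a,b}\sum_tv(t)\delta(s,a,b)(t)\xi_1(s)(a)\xi_2(s)(b)$, $\mathrm{Pre}_{1:\xi_1}(v)(s)=\inf_{\xi_2}\mathrm{Pre}_{\xi_1,\xi_2}(v)(s)$, $\mathrm{Pre}_1(v)(s)=\sup_{\xi_1}\mathrm{Pre}_{1:\xi_1}(v)(s)$. Fix $T\subseteq S$, $W_2=\{s:\mathrm{val}_1(\mathrm{Reach}(T))(s)=0\}$; all states of $T\cup W_2$ are absorbing. A player-1 strategy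 is proper if, against every player-2 strategy, from every $s\in S\setminus(T\cup W_2)$, $T\cup W_2$ is reached with probability 1; a selector $\xi$ is proper if $\overline{\xi}$ is. The algorithm: $\gamma_0$ is the uniform selector on $\Gamma_1(s)$, $v_i=\mathrm{val}_1^{\overline{\gamma}_i}(\mathrm{Reach}(T))$. At iteration $i$: $I=\{s\in S\setminus(T\cup W_2):\mathrm{Pre}_1(v_i)(s)>v_i(s)\}$; $\xi_1$ is a selector with $\mathrm{Pre}_{1:\xi_1}(v_i)(s)=\mathrm{Pre}_1(v_i)(s)$ for $s\in I$; $\gamma_{i+1}(s)=\gamma_i(s)$ for $s\notin I$ and $\gamma_{i+1}(s)=\xi_1(s)$ for $s\in I$; stop when $I=\emptyset$. *)

From HB Require Import structures.
From mathcomp Require Import all_boot all_order all_algebra.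
From mathcomp Require Import all_classical all_reals.
Set Implicit Arguments. Unset Strict Implicit. Unset Printing Implicit Defensive.
Import Order.TTheory GRing.Theory Num.Theory.
Local Open Scope classical_set_scope.
Local Open Scope ring_scope.

Section ConcurrentGames.
Context {R : realType} {S M : finType}.

Definition is_distr (X : finType) (d : {ffun X -> R}) : Prop :=
  (forall x, 0 <= d x) /\ \sum_(x : X) d x = 1.

Definition is_move_distr (G : S -> {set M}) (s : S) (d : {ffun M -> R}) : Prop :=
  is_distr d /\ (forall a, a \notin G s -> d a = 0).

Definition is_cgs (G1 G2 : S -> {set M}) (delta : S -> M -> M -> {ffun S -> R}) : Prop :=
  (forall s, G1 s != finset.set0) /\ (forall s, G2 s != finset.set0) /\
  (forall s a b, a \in G1 s -> b \in G2 s -> is_distr (delta s a b)).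

Definition selector := S -> {ffun M -> R}.
Definition is_selector (G : S -> {set M}) (xi : selector) : Prop :=
  forall s, is_move_distr G s (xi s).

(* General (history-dependent, randomized) strategies: given the history
   of previously visited states h and the current state s, a distribution
   over moves. *)
Definition strategy := seq S -> S -> {ffun M -> R}.
Definition is_strategy (G : S -> {set M}) (pi : strategy) : Prop :=
  forall h s, is_move_distr G s (pi h s).

Definition memoryless (xi : selector) : strategy := fun _ s => xi s.

Variable delta : S -> M -> M -> {ffun S -> R}.

Fixpoint reach_within (X : {set S}) (pi1 pi2 : strategy) (n : nat)
    (h : seq S) (s : S) : R :=
  if s \in X then 1 else
  match n with
  | 0 => 0
  | n'.+1 => \sum_(a : M) \sum_(b : M) \sum_(t : S)
       pi1 h s a * pi2 h s b * delta s a b t *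
       reach_within X pi1 pi2 n' (rcons h s) t
  end.

(* Pr_s^{pi1,pi2}(Reach X): by continuity of the measure, the limit
   (= supremum, the sequence being nondecreasing) of the probabilities of
   reaching X within n steps. *)
Definition prob_reach (X : {set S}) (pi1 pi2 : strategy) (s : S) : R :=
  sup [set r | exists n, r = reach_within X pi1 pi2 n [::] s].

Definition val1_strat (G2 : S -> {set M}) (X : {set S}) (pi1 : strategy) (s : S) : R :=
  inf [set r | exists pi2, is_strategy G2 pi2 /\ r = prob_reach X pi1 pi2 s].

Definition val1 (G1 G2 : S -> {set M}) (X : {set S}) (s : S) : R :=
  sup [set r | exists pi1, is_strategy G1 pi1 /\ r = val1_strat G2 X pi1 s].

Definition pre2 (xi1 xi2 : selector) (v : S -> R) (s : S) : R :=
  \sum_(a : M) \sum_(b : M) \sum_(t : S)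
     v t * delta s a b t * xi1 s a * xi2 s b.

Definition pre1_sel (G2 : S -> {set M}) (xi1 : selector) (v : S -> R) (s : S) : R :=
  inf [set r | exists xi2, is_selector G2 xi2 /\ r = pre2 xi1 xi2 v s].

Definition pre1 (G1 G2 : S -> {set M}) (v : S -> R) (s : S) : R :=
  sup [set r | exists xi1, is_selector G1 xi1 /\ r = pre1_sel G2 xi1 v s].

Definition W2 (G1 G2 : S -> {set M}) (T : {set S}) : {set S} :=
  [set s | val1 G1 G2 T s == 0].

Definition absorbing (G1 G2 : S -> {set M}) (A : {set S}) : Prop :=
  forall s a b, s \in A -> a \in G1 s -> b \in G2 s -> delta s a b s = 1.

Definition proper_strategy (G1 G2 : S -> {set M}) (T : {set S}) (pi1 : strategy) : Prop :=
  forall pi2, is_strategy G2 pi2 ->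
  forall s, s \notin T :|: W2 G1 G2 T ->
    prob_reach (T :|: W2 G1 G2 T) pi1 pi2 s = 1.

Definition proper_selector (G1 G2 : S -> {set M}) (T : {set S}) (xi : selector) : Prop :=
  proper_strategy G1 G2 T (memoryless xi).

Definition uniform_selector (G1 : S -> {set M}) : selector :=
  fun s => [ffun a => if a \in G1 s then (#|G1 s|%:R)^-1 else 0].

Definition improve_set (G1 G2 : S -> {set M}) (T : {set S}) (v : S -> R) : {set S} :=
  [set s | (s \notin T :|: W2 G1 G2 T) && (v s < pre1 G1 G2 v s)].

(* One iteration of the algorithm, from gam (= gamma_i) to gam' (= gamma_{i+1}):
   the algorithm has not stopped (I nonempty), and gam' is gam modified on I
   by a selector xi1 attaining Pre_1(v_i) on I. *)
Definition improve_step (G1 G2 : S -> {set M}) (T : {set S})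
    (gam gam' : selector) : Prop :=
  let v := val1_strat G2 T (memoryless gam) in
  let I := improve_set G1 G2 T v in
  I != finset.set0 /\
  exists xi1, is_selector G1 xi1 /\
    (forall s, s \in I -> pre1_sel G2 xi1 v s = pre1 G1 G2 v s) /\
    (forall s, gam' s = if s \in I then xi1 s else gam s).

End ConcurrentGames.

From HB Require Import structures.
From mathcomp Require Import all_boot all_order all_algebra.
From mathcomp Require Import all_classical all_reals.
From mathcomp Require Import ring lra.
Import Order.TTheory GRing.Theory Num.Theory.
Local Open Scope ring_scope.
Set Implicit Arguments. Unset Strict Implicit. Unset Printing Implicit Defensive.

(* A memoryless selector [xi] reaches a target [A] almost surely against every
   player-2 strategy iff it admits no trap: a nonempty set of states outside
   [A] in each of which some player-2 move keeps every [xi]-successor inside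
   the set.  With no trap every state lies in the attractor of [A], so within
   [#|S|] rounds [A] is reached with probability bounded away from 0, and
   iterating this bound gives probability 1.

   Let [v] be the value of the proper selector [gam i], and suppose
   [gam i.+1] had a trap [K]; let [s] be a state of [K] where [v] is maximal
   and [b] the move of player 2 keeping [gam i.+1] in [K].  The one-round mean
   of [v] under [gam i.+1] and [b] is at most [v s].  An improved state has
   [v s < Pre_{1:gam i.+1}(v)(s)], which is at most that mean, so [s] was not
   improved and [gam i.+1 s = gam i s].  But [v s] is also at most the mean
   under [gam i] and [b] (player 2 can play [b] and then respond
   near-optimally), so the mean is exactly [v s] and every successor has
   maximal value.  Hence the maximal-value states of [K] form a trap for
   [gam i], which is impossible. *)

Lemma sup_contraction_eq1 (R : realType) (u : nat -> R) k c :
  c < 1 -> (forall n, u n <= 1) -> (forall n, 1 - u (n + k) <= c * (1 - u n)) ->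
  sup [set r | exists n, r = u n]%classic = 1.
Proof.
move=> c_lt1 u_le1 contract; set E := [set r | _]%classic.
have E_neq0 : (E !=set0)%classic by exists (u 0%N); exists 0%N.
have E_ub1 : ubound E 1 by move=> r [n ->].
have le_sup n : u n <= sup E by apply: ub_le_sup; [exists 1 | exists n].
have sup_le1 : sup E <= 1 by apply: ge_sup.
apply/eqP; rewrite eq_le sup_le1 /= leNgt; apply/negP => sup_lt1.
have gap_le n : 1 - sup E <= c * (1 - u n).
  by apply: le_trans (contract n); rewrite lerB // le_sup.
have [c_le0|c_gt0] := lerP c 0.
  by have := gap_le 0%N; have := u_le1 0%N; nra.
have u_le n : u n <= 1 - (1 - sup E) / c.
  by rewrite lerBrDl -lerBrDr ler_pdivrMr // mulrC gap_le.
have : sup E <= 1 - (1 - sup E) / c by apply: ge_sup => // r [n ->].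
rewrite lerBrDl -lerBrDr ler_pdivrMr //.
nra.
Qed.

Lemma exists_pos_lower_bound (R : realType) (X : finType) (f : X -> R) :
  exists2 q, 0 < q <= 1 & forall x, 0 < f x -> q <= f x.
Proof.
exists (\big[Num.min/1]_(x | 0 < f x) f x); last by move=> x; apply: bigmin_le_cond.
by rewrite bigmin_le_id andbT; apply: lt_bigmin.
Qed.

Section ConcurrentGame.
Variables (R : realType) (S M : finType).
Variables (G1 G2 : S -> {set M}) (delta : S -> M -> M -> {ffun S -> R}).
Hypothesis delta_distr :
  forall s a b, a \in G1 s -> b \in G2 s -> is_distr (delta s a b).

Definition step_mean (d1 d2 : {ffun M -> R}) (s : S) (f : S -> R) : R :=
  \sum_a \sum_b \sum_t d1 a * d2 b * delta s a b t * f t.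

Definition dirac (b : M) : {ffun M -> R} := [ffun c => (c == b)%:R].

Lemma dirac_neq0 b c : dirac b c != 0 -> c = b.
Proof. by rewrite ffunE; case: (c =P b) => // _; rewrite eqxx. Qed.

Lemma dirac_move_distr s b : b \in G2 s -> is_move_distr G2 s (dirac b).
Proof.
move=> b_in; split; first split.
- by move=> c; rewrite ffunE ler0n.
- by rewrite (bigD1 b) //= ffunE eqxx big1 ?addr0 // => c /negbTE; rewrite ffunE => ->.
- by move=> c c_notin; rewrite ffunE; case: eqP c_notin => // ->; rewrite b_in.
Qed.

Lemma step_meanB d1 d2 s f g :
  step_mean d1 d2 s (fun t => f t - g t) = step_mean d1 d2 s f - step_mean d1 d2 s g.
Proof.
rewrite /step_mean -sumrB; apply: eq_bigr => a _; rewrite -sumrB.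
by apply: eq_bigr => b _; rewrite -sumrB; apply: eq_bigr => t _; rewrite mulrBr.
Qed.

Lemma step_meanD d1 d2 s f g :
  step_mean d1 d2 s (fun t => f t + g t) = step_mean d1 d2 s f + step_mean d1 d2 s g.
Proof.
rewrite /step_mean -big_split; apply: eq_bigr => a _; rewrite -big_split.
by apply: eq_bigr => b _; rewrite -big_split; apply: eq_bigr => t _; rewrite mulrDr.
Qed.

Lemma step_meanZ d1 d2 s c f :
  step_mean d1 d2 s (fun t => c * f t) = c * step_mean d1 d2 s f.
Proof.
rewrite /step_mean mulr_sumr; apply: eq_bigr => a _; rewrite mulr_sumr.
by apply: eq_bigr => b _; rewrite mulr_sumr; apply: eq_bigr => t _; rewrite mulrCA.
Qed.

Lemma selector_weight_ge0 (xi : @selector R S M) s a b t :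
  is_selector G1 xi -> b \in G2 s -> 0 <= xi s a * delta s a b t.
Proof.
move=> /(_ s) [[xi_ge0 _] xi_out] b_in.
have [a_in|a_out] := boolP (a \in G1 s); last by rewrite xi_out // mul0r.
by have [delta_ge0 _] := delta_distr a_in b_in; rewrite mulr_ge0.
Qed.

Section Distributions.
Variables (s : S) (d1 d2 : {ffun M -> R}).
Hypotheses (d1_distr : is_move_distr G1 s d1) (d2_distr : is_move_distr G2 s d2).

Lemma step_weight_ge0 a b t : 0 <= d1 a * d2 b * delta s a b t.
Proof.
case: d1_distr d2_distr => [[d1_ge0 _] d1_out] [[d2_ge0 _] d2_out].
have [a_in|a_out] := boolP (a \in G1 s); last by rewrite d1_out // !mul0r.
have [b_in|b_out] := boolP (b \in G2 s); last by rewrite d2_out // mulr0 mul0r.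
by have [delta_ge0 _] := delta_distr a_in b_in; rewrite !mulr_ge0.
Qed.

Lemma step_mean_const c : step_mean d1 d2 s (fun=> c) = c.
Proof.
case: d1_distr d2_distr => [[_ d1_sum1] d1_out] [[_ d2_sum1] d2_out].
have weights_sum a b : \sum_t d1 a * d2 b * delta s a b t = d1 a * d2 b.
  rewrite -mulr_sumr.
  have [a_in|a_out] := boolP (a \in G1 s); last by rewrite d1_out // !mul0r.
  have [b_in|b_out] := boolP (b \in G2 s); last by rewrite d2_out // mulr0 !mul0r.
  by have [_ ->] := delta_distr a_in b_in; rewrite mulr1.
rewrite /step_mean.
under eq_bigr => a _ do under eq_bigr => b _ do rewrite -mulr_suml weights_sum.
under eq_bigr => a _ do rewrite -mulr_suml -mulr_sumr d2_sum1 mulr1.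
by rewrite -mulr_suml d1_sum1 mul1r.
Qed.

Lemma le_step_mean_support f g :
  (forall a b t, d1 a != 0 -> d2 b != 0 -> delta s a b t != 0 -> f t <= g t) ->
  step_mean d1 d2 s f <= step_mean d1 d2 s g.
Proof.
move=> le_fg; apply: ler_sum => a _; apply: ler_sum => b _; apply: ler_sum => t _.
have [w0|w_neq0] := eqVneq (d1 a * d2 b * delta s a b t) 0; first by rewrite w0 !mul0r.
apply: ler_wpM2l; first exact: step_weight_ge0.
move: w_neq0; rewrite !mulf_eq0 !negb_or => /andP[/andP[a_supp b_supp] t_supp].
exact: le_fg a_supp b_supp t_supp.
Qed.

Lemma le_step_mean f g :
  (forall t, f t <= g t) -> step_mean d1 d2 s f <= step_mean d1 d2 s g.
Proof. by move=> le_fg; apply: le_step_mean_support => a b t *; apply: le_fg. Qed.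

Lemma step_mean_ge0 f : (forall t, 0 <= f t) -> 0 <= step_mean d1 d2 s f.
Proof. by move=> f_ge0; rewrite -(step_mean_const 0); apply: le_step_mean. Qed.

Lemma step_mean_max_support_eq f c :
  (forall a b t, d1 a != 0 -> d2 b != 0 -> delta s a b t != 0 -> f t <= c) ->
  c <= step_mean d1 d2 s f ->
  forall a b t, d1 a != 0 -> d2 b != 0 -> delta s a b t != 0 -> f t = c.
Proof.
move=> f_le_c c_le a b t a_supp b_supp t_supp.
pose gap a b t := d1 a * d2 b * delta s a b t * (c - f t).
have gap_ge0 a' b' t' : 0 <= gap a' b' t'.
  have [w0|w_neq0] := eqVneq (d1 a' * d2 b' * delta s a' b' t') 0.
    by rewrite /gap w0 mul0r.
  rewrite mulr_ge0 ?step_weight_ge0 // subr_ge0; move: w_neq0.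
  rewrite !mulf_eq0 !negb_or => /andP[/andP[a'_supp b'_supp] t'_supp].
  exact: f_le_c a'_supp b'_supp t'_supp.
have gap_sum0 : \sum_a \sum_b \sum_t gap a b t = 0.
  apply/eqP; rewrite eq_le; apply/andP; split; last first.
    by do 3!(apply: sumr_ge0 => ? _).
  have -> : \sum_a \sum_b \sum_t gap a b t = step_mean d1 d2 s (fun t => c - f t) by [].
  by rewrite step_meanB step_mean_const subr_le0.
have sum_ge0 (F : S -> R) : (forall t, 0 <= F t) -> 0 <= \sum_t F t.
  by move=> F_ge0; apply: sumr_ge0 => t' _.
have gap_a0 := @psumr_eq0P _ _ _ _
  (fun a' _ => sumr_ge0 _ (fun b' _ => sum_ge0 _ (gap_ge0 a' b'))) gap_sum0 a isT.
have gap_ab0 := @psumr_eq0P _ _ _ _ (fun b' _ => sum_ge0 _ (gap_ge0 a b')) gap_a0 b isT.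
have /eqP := @psumr_eq0P _ _ _ _ (fun t' _ => gap_ge0 a b t') gap_ab0 t isT.
by rewrite !mulf_eq0 (negbTE a_supp) (negbTE b_supp) (negbTE t_supp) subr_eq0 => /eqP.
Qed.

Lemma step_mean_ge_witness f c :
  (forall t, 0 <= f t) ->
  (forall b, b \in G2 s -> exists a t, c <= d1 a * delta s a b t * f t) ->
  c <= step_mean d1 d2 s f.
Proof.
case: d2_distr => [[d2_ge0 d2_sum1] d2_out] f_ge0 witness.
have term_ge0 a b t : 0 <= d1 a * d2 b * delta s a b t * f t.
  exact: mulr_ge0 (step_weight_ge0 _ _ _) (f_ge0 _).
rewrite /step_mean exchange_big /= -[c]mul1r -d2_sum1 mulr_suml.
apply: ler_sum => b _.
have [b_in|b_out] := boolP (b \in G2 s); last first.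
  by rewrite d2_out // mul0r; do 2!(apply: sumr_ge0 => ? _); rewrite mulr0 !mul0r.
have [a0 [t0 le_c]] := witness b b_in.
apply: (@le_trans _ _ (d1 a0 * d2 b * delta s a0 b t0 * f t0)).
  rewrite (_ : d1 a0 * _ * _ * _ = d2 b * (d1 a0 * delta s a0 b t0 * f t0)); last by ring.
  by apply: ler_wpM2l.
rewrite (bigD1 a0) //= (bigD1 t0) //= -addrA lerDl.
by apply: addr_ge0; apply: sumr_ge0 => ? _; rewrite ?sumr_ge0.
Qed.

End Distributions.
Hypothesis G2_neq0 : forall s, G2 s != finset.set0.

Lemma reach_within_in (X : {set S}) (pi1 pi2 : @strategy R S M) n h s :
  s \in X -> reach_within delta X pi1 pi2 n h s = 1.
Proof. by case: n => [|n] /= ->. Qed.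

Lemma reach_withinS (X : {set S}) (pi1 pi2 : @strategy R S M) n h s :
  s \notin X ->
  reach_within delta X pi1 pi2 n.+1 h s =
  step_mean (pi1 h s) (pi2 h s) s (reach_within delta X pi1 pi2 n (rcons h s)).
Proof. by rewrite /= => /negbTE ->. Qed.

Section Strategies.
Variables (X : {set S}) (pi1 pi2 : @strategy R S M).
Hypotheses (pi1_strat : is_strategy G1 pi1) (pi2_strat : is_strategy G2 pi2).

Lemma reach_within_bounds n h s : 0 <= reach_within delta X pi1 pi2 n h s <= 1.
Proof.
elim: n h s => [|n IH] h s.
  by rewrite /=; case: ifP; rewrite ?lexx ?ler01.
have [s_in|s_notin] := boolP (s \in X); first by rewrite reach_within_in ?lexx ?ler01.
rewrite reach_withinS //; apply/andP; split.
  by apply: (step_mean_ge0 (pi1_strat h s) (pi2_strat h s)) => t; case/andP: (IH (rcons h s) t).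
rewrite -[X in _ <= X](step_mean_const (pi1_strat h s) (pi2_strat h s)).
by apply: (le_step_mean (pi1_strat h s) (pi2_strat h s)) => t; case/andP: (IH (rcons h s) t).
Qed.

Let reach_seq s := [set r | exists n, r = reach_within delta X pi1 pi2 n [::] s]%classic.

Let reach_seq_neq0 s : (reach_seq s !=set0)%classic.
Proof. by exists (reach_within delta X pi1 pi2 0 [::] s); exists 0%N. Qed.

Let reach_seq_ub s : ubound (reach_seq s) 1.
Proof. by move=> r [n ->]; case/andP: (reach_within_bounds n [::] s). Qed.

Lemma reach_within_le_prob n s :
  reach_within delta X pi1 pi2 n [::] s <= prob_reach delta X pi1 pi2 s.
Proof. by apply: ub_le_sup; [exists 1; apply: reach_seq_ub | exists n]. Qed.

Lemma prob_reach_le c s :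
  (forall n, reach_within delta X pi1 pi2 n [::] s <= c) ->
  prob_reach delta X pi1 pi2 s <= c.
Proof. by move=> le_c; apply: ge_sup; [exact: reach_seq_neq0 | move=> r [n ->]]. Qed.

Lemma prob_reach_bounds s : 0 <= prob_reach delta X pi1 pi2 s <= 1.
Proof.
apply/andP; split; last by apply: ge_sup; [exact: reach_seq_neq0 | exact: reach_seq_ub].
apply: le_trans (reach_within_le_prob 0 s).
by case/andP: (reach_within_bounds 0 [::] s).
Qed.

Lemma reach_within_contract m c :
  (forall h t, 1 - reach_within delta X pi1 pi2 m h t <= c) ->
  forall n h s, 1 - reach_within delta X pi1 pi2 (n + m) h s <=
                c * (1 - reach_within delta X pi1 pi2 n h s).
Proof.
move=> m_bound; elim=> [|n IH] h s.
  have [s_in|s_notin] := boolP (s \in X); first by rewrite !reach_within_in // subrr mulr0.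
  by rewrite /= (negbTE s_notin) subr0 mulr1.
have [s_in|s_notin] := boolP (s \in X); first by rewrite !reach_within_in // subrr mulr0.
have d1_distr := pi1_strat h s; have d2_distr := pi2_strat h s.
rewrite addSn !reach_withinS // -(step_mean_const d1_distr d2_distr 1).
rewrite -!step_meanB -step_meanZ.
by apply: (le_step_mean d1_distr d2_distr) => t; exact: IH.
Qed.

End Strategies.

Lemma exists_moves2 : exists bs : S -> M, forall s, bs s \in G2 s.
Proof.
have [bs bs_in] : {bs : S -> M & forall s, bs s \in G2 s}.
  by apply: (@choice _ _ (fun s b => b \in G2 s)) => s; apply/set0Pn; exact: G2_neq0.
by exists bs.
Qed.

Definition pure_strategy (bs : S -> M) : @strategy R S M := fun _ s => dirac (bs s).

Lemma pure_strategyP bs : (forall s, bs s \in G2 s) -> is_strategy G2 (pure_strategy bs).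
Proof. by move=> bs_in h s; apply: dirac_move_distr. Qed.

Lemma exists_strategy2 : exists pi2 : @strategy R S M, is_strategy G2 pi2.
Proof. by have [bs bs_in] := exists_moves2; exists (pure_strategy bs); apply: pure_strategyP. Qed.

Section Values.
Variables (X : {set S}) (pi1 : @strategy R S M).
Hypothesis pi1_strat : is_strategy G1 pi1.

Let val_set s := [set r | exists pi2, is_strategy G2 pi2 /\
  r = prob_reach delta X pi1 pi2 s]%classic.

Let val_set_lb s : lbound (val_set s) 0.
Proof.
by move=> r [pi2 [pi2_strat ->]]; case/andP: (prob_reach_bounds X pi1_strat pi2_strat s).
Qed.

Lemma val1_strat_ge0 s : 0 <= val1_strat delta G2 X pi1 s.
Proof.
have [pi2 pi2_strat] := exists_strategy2.
by apply: lb_le_inf; [exists (prob_reach delta X pi1 pi2 s); exists pi2 | exact: val_set_lb].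
Qed.

Lemma val1_strat_le_prob pi2 s : is_strategy G2 pi2 ->
  val1_strat delta G2 X pi1 s <= prob_reach delta X pi1 pi2 s.
Proof. by move=> pi2_strat; apply: ge_inf; [exists 0; exact: val_set_lb | exists pi2]. Qed.

Lemma val1_strat_approx s e : 0 < e -> exists2 pi2, is_strategy G2 pi2 &
  prob_reach delta X pi1 pi2 s < val1_strat delta G2 X pi1 s + e.
Proof.
move=> e_gt0; have [pi0 pi0_strat] := exists_strategy2.
have lt_e : val1_strat delta G2 X pi1 s < val1_strat delta G2 X pi1 s + e by rewrite ltrDl.
have [|_ [pi2 [pi2_strat ->]] ?] := inf_lt _ lt_e; last by exists pi2.
by exists (prob_reach delta X pi1 pi0 s); exists pi0.
Qed.

End Values.

Section Traps.
Variables (xi : @selector R S M) (A : {set S}).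
Hypothesis xi_sel : is_selector G1 xi.

Definition is_trap (K : {set S}) : Prop :=
  forall s, s \in K -> s \notin A /\
    exists2 b, b \in G2 s & forall a t, xi s a != 0 -> delta s a b t != 0 -> t \in K.

Definition trap_free : Prop := forall K s, is_trap K -> s \notin K.

Definition almost_sure_reach : Prop :=
  forall pi2, is_strategy G2 pi2 -> forall s, s \notin A ->
    prob_reach delta A (memoryless xi) pi2 s = 1.

Lemma memoryless_strategy : is_strategy G1 (memoryless xi).
Proof. by move=> h s; exact: xi_sel. Qed.

Lemma trap_counter_strategy K : is_trap K -> exists2 pi2, is_strategy G2 pi2 &
  forall n h s, s \in K -> reach_within delta A (memoryless xi) pi2 n h s = 0.
Proof.
move=> K_trap.
have [bs bs_in] : {bs : S -> M & forall s, bs s \in G2 s /\ (s \in K ->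
    forall a t, xi s a != 0 -> delta s a (bs s) t != 0 -> t \in K)}.
  apply: (@choice _ _ (fun s b => b \in G2 s /\ (s \in K ->
    forall a t, xi s a != 0 -> delta s a b t != 0 -> t \in K))) => s.
  have [s_in|s_out] := boolP (s \in K).
    by have [_ [b b_in closed]] := K_trap s s_in; exists b.
  by case/set0Pn: (G2_neq0 s) => b b_in; exists b.
have pi2_strat : is_strategy G2 (pure_strategy bs).
  by apply: pure_strategyP => s; case: (bs_in s).
have reach_le0 n h s : s \in K ->
    reach_within delta A (memoryless xi) (pure_strategy bs) n h s <= 0.
  elim: n h s => [|n IH] h s s_in; have [s_notin _] := K_trap s s_in.
    by rewrite /= (negbTE s_notin).
  have [bs_G2 closed] := bs_in s.
  rewrite reach_withinS // -(step_mean_const (xi_sel s) (dirac_move_distr bs_G2) 0).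
  apply: le_step_mean_support => // a b t a_supp /dirac_neq0 -> t_supp.
  exact: IH (closed s_in a t a_supp t_supp).
exists (pure_strategy bs) => // n h s s_in; apply/eqP; rewrite eq_le reach_le0 //.
by case/andP: (reach_within_bounds A memoryless_strategy pi2_strat n h s).
Qed.

Lemma almost_sure_reach_trap_free : almost_sure_reach -> trap_free.
Proof.
move=> as_reach K s K_trap; apply/negP => s_in.
have [pi2 pi2_strat reach0] := trap_counter_strategy K_trap.
have [s_notin _] := K_trap s s_in.
have : prob_reach delta A (memoryless xi) pi2 s <= 0.
  by apply: prob_reach_le => n; rewrite reach0.
by rewrite as_reach // ler10.
Qed.

Definition attractor_step (X : {set S}) : {set S} :=
  A :|: [set s | [forall b in G2 s, [exists a, [exists t,
    [&& xi s a != 0, delta s a b t != 0 & t \in X]]]]].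

Lemma attractor_step_mono : {homo attractor_step : X Y / X \subset Y}.
Proof.
move=> X Y /fintype.subsetP subXY; apply/fintype.subsetP => s; rewrite !inE.
case/orP => [-> //|/forall_inP attr]; apply/orP; right; apply/forall_inP => b b_in.
have /existsP[a /existsP[t /and3P[a_supp t_supp t_in]]] := attr b b_in.
by apply/existsP; exists a; apply/existsP; exists t; rewrite a_supp t_supp subXY.
Qed.

Definition attractor : {set S} := fixset attractor_step.

Lemma attractor_complement_trap : is_trap (~: attractor).
Proof.
move=> s; rewrite inE => s_out.
have : s \notin attractor_step attractor by rewrite /attractor (fixsetK attractor_step_mono).
rewrite !inE negb_or => /andP[s_notin /forall_inPn[b b_in no_succ]].
split=> //; exists b => // a t a_supp t_supp.
rewrite inE; apply: contra no_succ => t_in.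
by apply/existsP; exists a; apply/existsP; exists t; rewrite a_supp t_supp.
Qed.

Lemma trap_free_attractor : trap_free -> attractor = [set: S].
Proof.
move=> tf; apply/setP => s; rewrite inE; apply/negPn/negP => s_out.
by have := tf _ s attractor_complement_trap; rewrite inE s_out.
Qed.

Lemma attractor_iter_reach_lb q pi2 : 0 < q <= 1 ->
  (forall s a b t, 0 < xi s a * delta s a b t -> q <= xi s a * delta s a b t) ->
  is_strategy G2 pi2 ->
  forall k h s, s \in iter k attractor_step finset.set0 ->
    q ^+ k <= reach_within delta A (memoryless xi) pi2 k h s.
Proof.
case/andP=> q_gt0 q_le1 q_lb pi2_strat.
have reach_ge0 n h t : 0 <= reach_within delta A (memoryless xi) pi2 n h t.
  by case/andP: (reach_within_bounds A memoryless_strategy pi2_strat n h t).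
elim=> [|k IH] h s; first by rewrite inE.
have [s_in|s_notin] := boolP (s \in A).
  by rewrite reach_within_in // exprn_ile1 // ltW.
rewrite iterS inE (negbTE s_notin) inE => /forall_inP attr.
rewrite reach_withinS //.
apply: (step_mean_ge_witness (xi_sel s) (pi2_strat h s)) => // b b_in.
have /existsP[a /existsP[t /and3P[a_supp t_supp t_in]]] := attr b b_in.
exists a, t; rewrite exprS; apply: ler_pM.
- exact: ltW.
- exact: exprn_ge0 (ltW q_gt0).
- by apply: q_lb; rewrite lt_def mulf_neq0 // selector_weight_ge0.
- exact: IH.
Qed.

Lemma trap_free_almost_sure_reach : trap_free -> almost_sure_reach.
Proof.
move=> tf pi2 pi2_strat s _.
have [q q_bounds q_lb] := exists_pos_lower_bound
  (fun x : S * M * M * S => xi x.1.1.1 x.1.1.2 * delta x.1.1.1 x.1.1.2 x.1.2 x.2).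
have p_gt0 : 0 < q ^+ #|S| by case/andP: q_bounds => q_gt0 _; rewrite exprn_gt0.
have reach_lb h t : q ^+ #|S| <= reach_within delta A (memoryless xi) pi2 #|S| h t.
  apply: attractor_iter_reach_lb => //; first by move=> s' a b t'; apply: (q_lb (s', a, b, t')).
  by rewrite -/(fixset _) -/attractor trap_free_attractor // inE.
apply: (@sup_contraction_eq1 _ _ #|S| (1 - q ^+ #|S|)).
- by rewrite ltrBlDr ltrDl.
- by move=> n; case/andP: (reach_within_bounds A memoryless_strategy pi2_strat n [::] s).
move=> n; apply: (reach_within_contract memoryless_strategy pi2_strat) => h t.
have := reach_lb h t; lra.
Qed.

End Traps.

Lemma pre2E (xi1 xi2 : @selector R S M) v s :
  pre2 delta xi1 xi2 v s = step_mean (xi1 s) (xi2 s) s v.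
Proof. by do 3!(apply: eq_bigr => ? _); ring. Qed.

Lemma pre1_sel_ext (xi xi' : @selector R S M) v s :
  xi s = xi' s -> pre1_sel delta G2 xi v s = pre1_sel delta G2 xi' v s.
Proof. by move=> eq_s; rewrite /pre1_sel /pre2 eq_s. Qed.

Lemma pre1_sel_le_step_mean (xi : @selector R S M) (v : S -> R) s b :
  is_selector G1 xi -> b \in G2 s -> (forall t, 0 <= v t) ->
  pre1_sel delta G2 xi v s <= step_mean (xi s) (dirac b) s v.
Proof.
move=> xi_sel b_in v_ge0; have [bs bs_in] := exists_moves2.
pose xi2 : @selector R S M := fun s' => if s' == s then dirac b else dirac (bs s').
have xi2_sel : is_selector G2 xi2.
  by move=> s'; rewrite /xi2; case: eqP => [->|_]; apply: dirac_move_distr.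
apply: ge_inf; last by exists xi2; split=> //; rewrite pre2E /xi2 eqxx.
exists 0 => r [xi2' [xi2'_sel ->]]; rewrite pre2E.
exact: (step_mean_ge0 (xi_sel s) (xi2'_sel s)).
Qed.

(* After the first round, the play follows [f t] from the first successor [t],
   as if it had started there. *)
Definition glue_strategy (pi0 : @strategy R S M) (f : S -> @strategy R S M) : @strategy R S M :=
  fun h s => if h is _ :: h' then f (head s h') h' s else pi0 [::] s.

Lemma reach_within_glue X (xi : @selector R S M) pi0 f n x h t :
  reach_within delta X (memoryless xi) (glue_strategy pi0 f) n (x :: h) t =
  reach_within delta X (memoryless xi) (f (head t h)) n h t.
Proof.
elim: n h t => [|n IH] h t //=; case: ifP => // _.
do 3!(apply: eq_bigr => ? _); rewrite IH.
by case: h.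
Qed.

Lemma val1_strat_le_step_mean (xi : @selector R S M) (T : {set S}) s b :
  is_selector G1 xi -> s \notin T -> b \in G2 s ->
  val1_strat delta G2 T (memoryless xi) s <=
  step_mean (xi s) (dirac b) s (val1_strat delta G2 T (memoryless xi)).
Proof.
move=> xi_sel s_notin b_in; set v := val1_strat delta G2 T (memoryless xi).
have xi_strat := memoryless_strategy xi_sel.
have v_ge0 t : 0 <= v t by exact: val1_strat_ge0.
have b_distr := dirac_move_distr b_in.
apply/ler_addgt0Pr => e e_gt0.
have [f f_spec] : {f : S -> @strategy R S M & forall t, is_strategy G2 (f t) /\
    prob_reach delta T (memoryless xi) (f t) t < v t + e}.
  apply: (@choice _ _ (fun t pi2 => is_strategy G2 pi2 /\
    prob_reach delta T (memoryless xi) pi2 t < v t + e)) => t.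
  by have [pi2 ? ?] := val1_strat_approx T (memoryless xi) t e_gt0; exists pi2.
have [pi0 pi0_strat] := exists_strategy2.
pose first_move : @strategy R S M := fun h s' => if s' == s then dirac b else pi0 h s'.
pose pi2 := glue_strategy first_move f.
have pi2_strat : is_strategy G2 pi2.
  move=> [|x h] s' /=; last by case: (f_spec (head s' h)).
  by rewrite /first_move; case: eqP => [->|_]; [exact: dirac_move_distr | exact: pi0_strat].
apply: le_trans (val1_strat_le_prob T xi_strat s pi2_strat) _.
apply: prob_reach_le => -[|n].
  rewrite /= (negbTE s_notin); apply: addr_ge0; last exact: ltW.
  exact: (step_mean_ge0 (xi_sel s) b_distr).
rewrite reach_withinS //.
have -> : pi2 [::] s = dirac b by rewrite /pi2 /= /first_move eqxx.
rewrite -(step_mean_const (xi_sel s) b_distr e) -step_meanD.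
apply: (le_step_mean (xi_sel s) b_distr) => t /=; rewrite reach_within_glue /=.
have [f_strat lt_e] := f_spec t.
exact/ltW/(le_lt_trans _ lt_e)/reach_within_le_prob.
Qed.

Lemma improve_trap_free (A : {set S}) (v : S -> R) (gam gam' : @selector R S M) :
  is_selector G1 gam' -> (forall t, 0 <= v t) ->
  (forall s b, s \notin A -> b \in G2 s -> v s <= step_mean (gam s) (dirac b) s v) ->
  (forall s, gam' s = gam s \/ v s < pre1_sel delta G2 gam' v s) ->
  trap_free gam A -> trap_free gam' A.
Proof.
move=> gam'_sel v_ge0 v_super improving gam_tf K s0 K_trap; apply/negP => s0_in.
have [sm sm_in sm_max] := @arg_maxP _ _ _ s0 [in K] v s0_in.
pose K' := [set t in K | v t == v sm].
suff K'_trap : is_trap gam A K' by have := gam_tf K' sm K'_trap; rewrite !inE sm_in eqxx.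
move=> s; rewrite inE => /andP[s_in /eqP vs_max].
have [s_notin [b b_in closed]] := K_trap s s_in.
have b_distr := dirac_move_distr b_in.
have succ_le a c t : gam' s a != 0 -> dirac b c != 0 -> delta s a c t != 0 -> v t <= v sm.
  by move=> a_supp /dirac_neq0 -> t_supp; apply/sm_max/(closed a).
have mean_le : step_mean (gam' s) (dirac b) s v <= v sm.
  rewrite -(step_mean_const (gam'_sel s) b_distr (v sm)).
  exact: (le_step_mean_support (gam'_sel s) b_distr).
have gam_s : gam' s = gam s.
  case: (improving s) => // improved.
  have := lt_le_trans improved (pre1_sel_le_step_mean gam'_sel b_in v_ge0).
  by rewrite vs_max => /lt_le_trans/(_ mean_le); rewrite ltxx.
split=> //; exists b => // a t a_supp t_supp.
have a_supp' : gam' s a != 0 by rewrite gam_s.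
rewrite inE (closed a) //=; apply/eqP.
apply: (step_mean_max_support_eq (gam'_sel s) b_distr succ_le _ a_supp' _ t_supp).
  by rewrite -vs_max gam_s; exact: v_super.
by rewrite ffunE eqxx oner_neq0.
Qed.


Lemma uniform_selectorP :
  (forall s, G1 s != finset.set0) -> is_selector G1 (uniform_selector G1 : @selector R S M).
Proof.
move=> G1_neq0 s; split; first split.
- by move=> a; rewrite ffunE; case: ifP => // _; rewrite invr_ge0 ler0n.
- under eq_bigr => a _ do rewrite ffunE.
  rewrite -big_mkcond /= sumr_const -[LHS]mulr_natr mulVf //.
  by rewrite pnatr_eq0 -lt0n card_gt0 G1_neq0.
- by move=> a a_out; rewrite ffunE (negbTE a_out).
Qed.

Section ImproveStep.
Variables (T : {set S}) (gam gam' : @selector R S M).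
Hypothesis step : improve_step delta G1 G2 T gam gam'.

Lemma improve_step_selector : is_selector G1 gam -> is_selector G1 gam'.
Proof.
case: step => _ [xi1 [xi1_sel [_ gam'_def]]] gam_sel s.
by rewrite gam'_def; case: ifP => _; [exact: xi1_sel | exact: gam_sel].
Qed.

Lemma improve_step_improving (v := val1_strat delta G2 T (memoryless gam)) s :
  gam' s = gam s \/ v s < pre1_sel delta G2 gam' v s.
Proof.
case: step => _ [xi1 [_ [xi1_opt gam'_def]]].
have [s_in|s_out] := boolP (s \in improve_set delta G1 G2 T v).
  right; rewrite (@pre1_sel_ext gam' xi1) ?xi1_opt ?gam'_def ?s_in //.
  by move: s_in; rewrite inE => /andP[].
by left; rewrite gam'_def (negbTE s_out).
Qed.

End ImproveStep.
End ConcurrentGame.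

Theorem lemma6 (R : realType) (S M : finType)
  (G1 G2 : S -> {set M}) (delta : S -> M -> M -> {ffun S -> R}) (T : {set S})
  (Hcgs : is_cgs G1 G2 delta)
  (Habs : absorbing delta G1 G2 (T :|: W2 delta G1 G2 T))
  (gam : nat -> @selector R S M)
  (Hgam0 : gam 0%N = uniform_selector G1)
  (i : nat)
  (Hrun : forall j, (j <= i)%N -> improve_step delta G1 G2 T (gam j) (gam j.+1)) :
  proper_selector delta G1 G2 T (gam i) ->
  proper_selector delta G1 G2 T (gam i.+1).
Proof.
case: Hcgs => G1_neq0 [G2_neq0 delta_distr].
have gam_sel j : (j <= i.+1)%N -> is_selector G1 (gam j).
  elim: j => [|j IH] j_le; first by rewrite Hgam0; exact: uniform_selectorP.
  exact: improve_step_selector (Hrun j j_le) (IH (ltnW j_le)).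
set A := T :|: W2 delta G1 G2 T.
have gam_i_sel := gam_sel i (leqW (leqnn i)).
have gam_i1_sel := gam_sel i.+1 (leqnn _).
move=> /(almost_sure_reach_trap_free delta_distr G2_neq0 gam_i_sel) gam_tf.
have gam'_tf : trap_free G2 delta (gam i.+1) A.
  apply: (improve_trap_free (v := val1_strat delta G2 T (memoryless (gam i)))
    delta_distr G2_neq0 gam_i1_sel _ _ _ gam_tf).
  - exact: (val1_strat_ge0 delta_distr G2_neq0 T (memoryless_strategy gam_i_sel)).
  - move=> s b; rewrite inE negb_or => /andP[s_notin _] b_in.
    exact: val1_strat_le_step_mean gam_i_sel s_notin b_in.
  - exact: improve_step_improving (Hrun i (leqnn i)).
exact: (trap_free_almost_sure_reach delta_distr gam_i1_sel gam'_tf).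
Qed.
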